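(* In the mirror triangle method with inexact directional derivatives (see context), let $\mathbb{E}_{k+1}$ denote conditional expectation over the randomness of iteration $k+1$ given iterations $1,\dots,k$. For every $u\in\mathbb{R}^n$ and $k\ge0$, with $R_k=\|u_k-u\|_L$ and $M_k=\|\nabla f(y_{k+1})\|_2$, $$\alpha_{k+1}\langle\nabla f(y_{k+1}),u_k-u\rangle\le A_{k+1}\big(f(y_{k+1})-\mathbb{E}_{k+1}f(x_{k+1})\big)+V(u,u_k)-\mathbb{E}_{k+1}V(u,u_{k+1})+\frac{A_{k+1}}L\delta^2+A_{k+1}\delta\frac{M_k}{L\sqrt n}+\alpha_{k+1}\delta\frac{\sqrt n}{\sqrt L}R_k.$$
   Context: $f:\mathbb{R}^n\to\mathbb{R}$ is convex, differentiable, with $\|\nabla f(x)-\nabla f(y)\|_2\le L\|x-y\|_2$. $\|x\|_L^2=L\sum_ix_i^2$ and $V(x,y)=\frac12\|x-y\|_L^2$. For each $k\ge0$, $e_{k+1}$ is a random vector on the Euclidean unit sphere such that, conditionally on the previous iterations, $\mathbb{E}[e_{k+1}^ie_{k+1}^j]=0$ for $i\ne j$ and $\mathbb{E}[(e_{k+1}^i)^2]=\frac1n$; $\tilde\delta_{k+1}$ is a random real with $|\tilde\delta_{k+1}|\le\delta$; $\tilde\nabla f(y)=n(\langle\nabla f(y),e_{k+1}\rangle+\tilde\delta_{k+1})e_{k+1}$. Method: $x_0=u_0=y_0$, $\alpha_0=1-\frac1n$, $A_0=\alpha_0$; for $k\ge0$: $\alpha_{k+1}=\frac{k+2n}{2n^2}$,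 $A_{k+1}=A_k+\alpha_{k+1}$, $y_{k+1}=\frac{\alpha_{k+1}u_k+A_kx_k}{A_{k+1}}$, $u_{k+1}=\arg\min_{x\in\mathbb{R}^n}\{V(x,u_k)+\alpha_{k+1}\langle\tilde\nabla f(y_{k+1}),x\rangle\}$, $x_{k+1}=y_{k+1}+n\frac{\alpha_{k+1}}{A_{k+1}}(u_{k+1}-u_k)$. *)

From HB Require Import structures.
From mathcomp Require Import all_boot all_order all_algebra.
From mathcomp Require Import all_classical all_reals all_analysis.
Set Implicit Arguments. Unset Strict Implicit. Unset Printing Implicit Defensive.
Import Order.TTheory GRing.Theory Num.Theory.
Import numFieldNormedType.Exports.
Local Open Scope ring_scope.

Section MTM.
Variables (R : realType) (n : nat).

Definition dotv (x y : 'rV[R]_n) : R := \sum_(i < n) x ord0 i * y ord0 i.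
Definition norm2 (x : 'rV[R]_n) : R := Num.sqrt (\sum_(i < n) x ord0 i ^+ 2).

Definition normL (L : R) (x : 'rV[R]_n) : R := Num.sqrt (L * \sum_(i < n) x ord0 i ^+ 2).
Definition Vdist (L : R) (x y : 'rV[R]_n) : R := 2^-1 * normL L (x - y) ^+ 2.

Definition alpha (k : nat) : R :=
  match k with
  | 0%N => 1 - n%:R^-1
  | k'.+1 => (k'%:R + 2 * n%:R) / (2 * n%:R ^+ 2)
  end.
Definition Aseq (k : nat) : R := \sum_(i < k.+1) alpha i.

Definition gtilde (gradf : 'rV[R]_n -> 'rV[R]_n) (y e : 'rV[R]_n) (dt : R) : 'rV[R]_n :=
  (n%:R * (dotv (gradf y) e + dt)) *: e.

Definition ynext (k : nat) (x u : 'rV[R]_n) : 'rV[R]_n :=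
  (Aseq k.+1)^-1 *: (alpha k.+1 *: u + Aseq k *: x).

(* One iteration k -> k+1 of the method, driven by (e_{k+1}, delta~_{k+1}):
   u' = argmin_z { V(z,u) + alpha_{k+1} <grad~ f(y_{k+1}), z> },
   x' = y_{k+1} + n alpha_{k+1}/A_{k+1} (u' - u). *)
Definition mtm_step (L : R) (gradf : 'rV[R]_n -> 'rV[R]_n) (k : nat)
    (x u e : 'rV[R]_n) (dt : R) (x' u' : 'rV[R]_n) : Prop :=
  let y := ynext k x u in
  let g := gtilde gradf y e dt in
  (forall z : 'rV[R]_n,
      Vdist L u' u + alpha k.+1 * dotv g u' <= Vdist L z u + alpha k.+1 * dotv g z)
  /\ x' = y + (n%:R * alpha k.+1 / Aseq k.+1) *: (u' - u).

End MTM.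

Arguments alpha {R} n k.
Arguments Aseq {R} n k.

From HB Require Import structures.
From mathcomp Require Import all_boot all_order all_algebra.
From mathcomp Require Import all_classical all_reals all_analysis.
From mathcomp Require Import measurable_realfun ring lra.
Import Order.TTheory GRing.Theory Num.Theory.
Import numFieldNormedType.Exports.
Local Open Scope ring_scope.

(* Write [alpha = alpha_{k+1}], [A = A_{k+1}], [g = grad f(y_{k+1})] and
   [s = <g, e> + delta~]. The prox step is explicit:
   [u_{k+1} = u_k - (alpha n s / L) e] and [x_{k+1} = y_{k+1} - (n^2 alpha^2 s / (A L)) e].
   The descent lemma of the L-smooth [f], the exact expansion of [V(u, u_{k+1})] and
   [n^2 alpha^2 <= A] give, for every realization of [(e, delta~)],
     A (f(y_{k+1}) - f(x_{k+1})) + V(u, u_k) - V(u, u_{k+1})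
       >= alpha n <g, e> <u_k - u, e> - (A/L) delta |<g, e>| - (A/L) delta^2
          - alpha n delta |<u_k - u, e>|.
   Taking expectations, [E[<g,e> <h,e>] = <g,h> / n] and
   [E|<g,e>| <= sqrt (E <g,e>^2) = |g| / sqrt n] give the bound. *)

Lemma young_mul {R : realFieldType} {lam : R} (a b : R) : 0 < lam ->
  a * b <= (lam * a ^+ 2 + lam^-1 * b ^+ 2) / 2.
Proof.
move=> lam_gt0.
have -> : (lam * a ^+ 2 + lam^-1 * b ^+ 2) / 2 = a * b + lam^-1 * (lam * a - b) ^+ 2 / 2.
  by field; rewrite gt_eqF.
by rewrite lerDl divr_ge0 // mulr_ge0 ?sqr_ge0 // invr_ge0 ltW.
Qed.

Section DotProduct.
Context {R : realType} {n : nat}.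
Implicit Types (x y z u g h : 'rV[R]_n) (c : R).

Lemma dotvC g h : dotv g h = dotv h g.
Proof. by apply: eq_bigr => i _; rewrite mulrC. Qed.

Lemma dotvDl x y h : dotv (x + y) h = dotv x h + dotv y h.
Proof. by rewrite /dotv -big_split; apply: eq_bigr => i _; rewrite !mxE mulrDl. Qed.

Lemma dotvNl g h : dotv (- g) h = - dotv g h.
Proof. by rewrite /dotv -sumrN; apply: eq_bigr => i _; rewrite !mxE mulNr. Qed.

Lemma dotvBl x y h : dotv (x - y) h = dotv x h - dotv y h.
Proof. by rewrite dotvDl dotvNl. Qed.

Lemma dotvZl c g h : dotv (c *: g) h = c * dotv g h.
Proof. by rewrite /dotv mulr_sumr; apply: eq_bigr => i _; rewrite !mxE mulrA. Qed.

Lemma dotvZr c g h : dotv g (c *: h) = c * dotv g h.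
Proof. by rewrite dotvC dotvZl dotvC. Qed.

Lemma dotvv x : dotv x x = \sum_(i < n) x ord0 i ^+ 2.
Proof. by apply: eq_bigr => i _; rewrite expr2. Qed.

Lemma dotvv_ge0 x : 0 <= dotv x x.
Proof. by rewrite dotvv sumr_ge0 // => i _; exact: sqr_ge0. Qed.

Lemma dotvv_eq0 x : (dotv x x == 0) = (x == 0).
Proof.
apply/idP/eqP => [|->]; last by rewrite /dotv big1 // => i _; rewrite mxE mul0r.
rewrite dotvv => /eqP /psumr_eq0P x0; apply/rowP => i; rewrite mxE.
by apply/eqP; rewrite -sqrf_eq0 x0 // => j _; exact: sqr_ge0.
Qed.

Lemma sqr_norm2 x : norm2 x ^+ 2 = dotv x x.
Proof. by rewrite /norm2 -dotvv sqr_sqrtr ?dotvv_ge0. Qed.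

Lemma sqr_normL (L : R) x : 0 <= L -> normL L x ^+ 2 = L * dotv x x.
Proof. by move=> L_ge0; rewrite /normL -dotvv sqr_sqrtr // mulr_ge0 ?dotvv_ge0. Qed.

Lemma normL_norm2 (L : R) x : 0 <= L -> normL L x = Num.sqrt L * norm2 x.
Proof. by move=> L_ge0; rewrite /normL /norm2 sqrtrM. Qed.

Lemma VdistE (L : R) x y : 0 <= L -> Vdist L x y = L / 2 * dotv (x - y) (x - y).
Proof. by move=> L_ge0; rewrite /Vdist sqr_normL // mulrCA mulrA. Qed.

Lemma dotv_young {lam : R} g h : 0 < lam ->
  dotv g h <= (lam * dotv g g + lam^-1 * dotv h h) / 2.
Proof.
move=> lam_gt0; rewrite !dotvv /dotv !mulr_sumr -big_split mulr_suml /=.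
by apply: ler_sum => i _; exact: young_mul.
Qed.

Lemma dotv_sqrDZ x h c :
  dotv (x + c *: h) (x + c *: h) = dotv x x + 2 * c * dotv x h + c ^+ 2 * dotv h h.
Proof.
rewrite !dotvDl ![dotv _ (_ + _)]dotvC !dotvDl !dotvZl !dotvZr [dotv h x]dotvC.
ring.
Qed.

(* Completing the square in [z]: the objective is [L/2 |z - z*|^2] plus a constant. *)
Lemma prox_step_closed_form {L a : R} {g u u'} : 0 < L ->
  (forall z, Vdist L u' u + a * dotv g u' <= Vdist L z u + a * dotv g z) ->
  u' = u - (a / L) *: g.
Proof.
move=> L_gt0 u'_min; set zs := u - (a / L) *: g.
have objective z : Vdist L z u + a * dotv g z
    = Vdist L zs u + a * dotv g zs + L / 2 * dotv (z - zs) (z - zs).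
  rewrite !VdistE ?ltW // /dotv !mulr_sumr -!big_split /=.
  by apply: eq_bigr => i _; rewrite /zs !mxE; field; rewrite gt_eqF.
have := u'_min zs; rewrite objective -[X in _ <= X]addr0 lerD2l.
rewrite pmulr_rle0 ?divr_gt0 // => le0.
by apply/eqP; rewrite -subr_eq0 -dotvv_eq0 eq_le le0 dotvv_ge0.
Qed.

End DotProduct.

Section SmoothFunction.
Context {R : realType} {n : nat} {L : R} {f : 'rV[R]_n -> R^o}.
Context {gradf : 'rV[R]_n -> 'rV[R]_n}.
Hypothesis L_gt0 : 0 < L.
Hypothesis f_diff : forall x, differentiable f x /\ forall h, 'd f x h = dotv (gradf x) h.
Hypothesis gradf_lip : forall x y, norm2 (gradf x - gradf y) <= L * norm2 (x - y).
Implicit Types (x y h : 'rV[R]_n).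

Lemma is_derive_line y h (t : R) :
  is_derive t (1 : R) (fun s : R => f (y + s *: h)) (dotv (gradf (y + t *: h)) h).
Proof.
set G := fun s : R => f (y + s *: h); set p := y + t *: h.
have quotE : (fun s : R => s^-1 *: ((G \o shift t) (s *: 1) - G t))
    = (fun s : R => s^-1 *: ((f \o shift p) (s *: h) - f p)).
  apply: funext => s; congr (_ *: (f _ - _)); apply/rowP => j.
  by rewrite /p !mxE /GRing.scale /= mulr1 mulrDl addrCA.
have [fp_diff fp_grad] := f_diff p.
apply: DeriveDef; first by rewrite /derivable quotE; exact: diff_derivable.
by rewrite /derive quotE -/(derive f p h) deriveE.
Qed.

Lemma dotv_grad_increment y h (t : R) : 0 < t ->
  dotv (gradf (y + t *: h) - gradf y) h <= L * t * dotv h h.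
Proof.
move=> t_gt0; set a := gradf (y + t *: h) - gradf y.
have Lt_gt0 : 0 < L * t by exact: mulr_gt0.
have a_le : dotv a a <= (L * t) ^+ 2 * dotv h h.
  have lip := gradf_lip (y + t *: h) y; rewrite addrAC subrr add0r in lip.
  have := ler_pM (sqrtr_ge0 _) (sqrtr_ge0 _) lip lip.
  rewrite -!expr2 exprMn !sqr_norm2 dotvZl dotvZr.
  by rewrite (_ : (L * t) ^+ 2 * _ = L ^+ 2 * (t * (t * dotv h h))) //; ring.
have iLt_gt0 : 0 < (L * t)^-1 by rewrite invr_gt0.
apply: le_trans (dotv_young a h iLt_gt0) _; rewrite invrK.
rewrite ler_pdivrMr // -subr_ge0.
have -> : L * t * dotv h h * 2 - ((L * t)^-1 * dotv a a + L * t * dotv h h)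
    = (L * t)^-1 * ((L * t) ^+ 2 * dotv h h - dotv a a).
  by field; rewrite !gt_eqF.
by apply: mulr_ge0; [exact: ltW | rewrite subr_ge0].
Qed.

(* [psi] below is nonincreasing on [0, 1]: its derivative is
   [<grad f(y + t h) - grad f(y), h> - L t |h|^2 <= 0]. *)
Lemma smooth_upper_bound y h :
  f (y + h) <= f y + dotv (gradf y) h + L / 2 * dotv h h.
Proof.
set B := dotv (gradf y) h; set S := dotv h h.
pose psi := (fun s : R => f (y + s *: h)) - B \*: (@id R) - (L / 2 * S) \*: (@id R ^+ 2).
have psi_derive t : is_derive t (1 : R) psi
    (dotv (gradf (y + t *: h)) h - B *: 1 - (L / 2 * S) *: ((2%:R * t ^+ 1) *: 1)).
  have line_derive := is_derive_line y h t. (* used by instance resolution *)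
  exact: is_deriveB.
have psi_derivable t : derivable psi t 1 by have [] := psi_derive t.
have psi_nincr : psi 1 <= psi 0.
  apply: (@ler0_derive1_le_cc _ psi 0 1).
  - by move=> t _.
  - move=> t; rewrite in_itv /= => /andP[t_gt0 _].
    rewrite derive1E derive_val /GRing.scale /= !mulr1 expr1 /B -dotvBl subr_le0.
    apply: le_trans (dotv_grad_increment y h t t_gt0) _.
    by rewrite -/S; lra.
  - exact: derivable_within_continuous.
  1-3: by rewrite ?in_itv /= ?lexx ?ler01.
have psiE s : psi s = f (y + s *: h) - B * s - L / 2 * S * s ^+ 2 by [].
move: psi_nincr; rewrite !psiE scale1r scale0r addr0 expr1n expr0n /=; lra.
Qed.

End SmoothFunction.

(* The integral is a supremum over simple minorants, so monotonicity needs
   no measurability. *)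
Lemma le_integral_nonmeasurable {d : measure_display} {T : measurableType d}
    {R : realType} (mu : {measure set T -> \bar R}) (F G : T -> \bar R) :
  (forall w, (F w <= G w)%E) -> (\int[mu]_w F w <= \int[mu]_w G w)%E.
Proof.
move=> FG; rewrite integralE [X in (_ <= X)%E]integralE; apply: leeB.
  rewrite !ge0_integralTE //; apply: ereal_sup_le => _ [h h_le <-].
  exists h => //= w; apply: le_trans (h_le w) _.
  by apply: (@funepos_le _ _ setT) => [v _|]; [exact: FG | exact: mem_set].
rewrite !ge0_integralTE //; apply: ereal_sup_le => _ [h h_le <-].
exists h => //= w; apply: le_trans (h_le w) _.
by apply: (@funeneg_le _ _ setT) => [v _|]; [exact: FG | exact: mem_set].
Qed.

Section BoundedMeasurable.
Context {d : measure_display} {T : measurableType d} {R : realType}.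
Variable P : probability T R.
Implicit Types X Y : T -> R.

(* The class of integrands used below: integrable for every probability and, unlike
   integrable functions, closed under products. *)
Definition bounded_measurable X :=
  measurable_fun setT X /\ exists M : R, forall w, `|X w| <= M.

Lemma bounded_measurable_cst (c : R) : bounded_measurable (fun=> c).
Proof. by split; [exact: measurable_cst | exists `|c|]. Qed.

Lemma bounded_measurableD X Y : bounded_measurable X -> bounded_measurable Y ->
  bounded_measurable (fun w => X w + Y w).
Proof.
move=> [mX [M XM]] [mY [N YN]]; split; first exact: measurable_funD.
by exists (M + N) => w; rewrite (le_trans (ler_normD _ _)) ?lerD.
Qed.

Lemma bounded_measurableN X : bounded_measurable X ->
  bounded_measurable (fun w => - X w).
Proof.
move=> [mX [M XM]]; split; first exact: measurable_funN.
by exists M => w; rewrite normrN.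
Qed.

Lemma bounded_measurableM X Y : bounded_measurable X -> bounded_measurable Y ->
  bounded_measurable (fun w => X w * Y w).
Proof.
move=> [mX [M XM]] [mY [N YN]]; split; first exact: measurable_funM.
by exists (M * N) => w; rewrite normrM ler_pM.
Qed.

Lemma bounded_measurable_norm X : bounded_measurable X ->
  bounded_measurable (fun w => `|X w|).
Proof.
move=> [mX [M XM]]; split; first by apply: measurableT_comp mX; exact: normr_measurable.
by exists M => w; rewrite normr_id.
Qed.

Lemma bounded_measurable_sum (I : Type) (s : seq I) (X : I -> T -> R) :
  (forall i, bounded_measurable (X i)) ->
  bounded_measurable (fun w => \sum_(i <- s) X i w).
Proof.
move=> bmX; elim: s => [|i s IH].
  by under eq_fun do rewrite big_nil; exact: bounded_measurable_cst.
by under eq_fun do rewrite big_cons; exact: bounded_measurableD.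
Qed.

Lemma bounded_measurable_integrable {X} : bounded_measurable X ->
  P.-integrable setT (EFin \o X).
Proof.
move=> [mX [M XM]]; apply: measurable_bounded_integrable => //.
  by rewrite (le_lt_trans (probability_le1 P measurableT)) ?ltry.
by exists M; split; rewrite ?num_real // => r Mr w _ /=; rewrite (le_trans (XM w)) ?ltW.
Qed.

Lemma EFin_Rintegral {X} : bounded_measurable X ->
  (\int[P]_w X w)%:E = (\int[P]_w (X w)%:E)%E.
Proof.
move=> bmX; rewrite fineK // integrable_fin_num //.
exact: bounded_measurable_integrable.
Qed.

Lemma probability_Rintegral_cst (c : R) : \int[P]_w c = c.
Proof.
rewrite Rintegral_cst // -[RHS]mulr1; congr (_ * _).
exact (f_equal fine (probability_setT P)).
Qed.

Lemma Rintegral_sum (I : Type) (s : seq I) (X : I -> T -> R) :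
  (forall i, bounded_measurable (X i)) ->
  \int[P]_w (\sum_(i <- s) X i w) = \sum_(i <- s) \int[P]_w X i w.
Proof.
move=> bmX; elim: s => [|i s IH].
  by under eq_Rintegral do rewrite big_nil; rewrite probability_Rintegral_cst big_nil.
under eq_Rintegral do rewrite big_cons.
rewrite RintegralD ?big_cons ?IH //; apply: bounded_measurable_integrable => //.
exact: bounded_measurable_sum.
Qed.

Lemma probability_inhabited : inhabited T.
Proof.
apply/not_notP => noT; have := probability_setT P.
rewrite (_ : setT = set0) ?measure0; first by move/esym/eqP; rewrite onee_eq0.
by apply/seteqP; split => // w; exfalso; exact: noT (inhabits w).
Qed.

End BoundedMeasurable.

Ltac bounded_measurable_closure :=
  repeat first [ assumption | exact: bounded_measurable_cst
               | apply: bounded_measurableD | apply: bounded_measurableN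
               | apply: bounded_measurableM
               | apply: bounded_measurable_norm ].

Ltac integrable_closure :=
  apply: bounded_measurable_integrable; bounded_measurable_closure.

Section Moments.
Context {d : measure_display} {T : measurableType d} {R : realType}.
Variable P : probability T R.

(* Integrate [|X| <= (lam X^2 + 1/lam) / 2] with [lam = 1 / (sqrt E[X^2] + eps)]. *)
Lemma Rintegral_abs_le_sqrt {X : T -> R} : bounded_measurable X ->
  \int[P]_w `|X w| <= Num.sqrt (\int[P]_w X w ^+ 2).
Proof.
move=> bmX; set m := \int[P]_w X w ^+ 2; set r := Num.sqrt m.
have m_ge0 : 0 <= m by apply: Rintegral_ge0 => w _; exact: sqr_ge0.
have r_ge0 : 0 <= r := sqrtr_ge0 m.
apply/ler_addgt0Pr => eps eps_gt0; set lam := (r + eps)^-1.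
have lam_gt0 : 0 < lam by rewrite invr_gt0 ltr_wpDl.
have pointwise w : `|X w| <= (lam * X w ^+ 2 + lam^-1) / 2.
  have := young_mul `|X w| 1 lam_gt0.
  by rewrite mulr1 real_normK ?num_real // expr1n mulr1.
apply: le_trans (le_Rintegral _ _ _ (fun w _ => pointwise w)) _ => //;
  try by integrable_closure.
rewrite RintegralZr //; try by integrable_closure.
rewrite RintegralD //; try by integrable_closure.
rewrite RintegralZl // ?probability_Rintegral_cst -/m; last by integrable_closure.
rewrite (_ : m = r ^+ 2); last by rewrite sqr_sqrtr.
have rE_gt0 : 0 < r + eps by rewrite ltr_wpDl.
rewrite -subr_ge0 (_ : r + eps - _ = eps * (2 * r + eps) / (2 * (r + eps))); last first.
  by rewrite /lam; field; rewrite gt_eqF.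
by apply: divr_ge0; apply: mulr_ge0; lra.
Qed.

End Moments.

Section RandomDirection.
Context {d : measure_display} {T : measurableType d} {R : realType} {n : nat}.
Context {P : probability T R} {e : T -> 'rV[R]_n}.
Hypothesis e_meas : forall i, measurable_fun setT (fun w => e w ord0 i).
Hypothesis e_sphere : forall w, norm2 (e w) = 1.
Hypothesis e_cross : forall i j : 'I_n, i != j ->
  (\int[P]_w (e w ord0 i * e w ord0 j)%:E = 0)%E.
Hypothesis e_sq : forall i : 'I_n, (\int[P]_w (e w ord0 i ^+ 2)%:E = (n%:R^-1)%:E)%E.

Lemma bounded_measurable_coord i : bounded_measurable (fun w => e w ord0 i).
Proof.
split; first exact: e_meas.
exists 1 => w; rewrite -(expr_le1 (_ : (0 < 2)%N)) // real_normK ?num_real //.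
have := sqr_norm2 (e w); rewrite e_sphere expr1n dotvv (bigD1 i) //= => ->.
by rewrite lerDl sumr_ge0 // => j _; exact: sqr_ge0.
Qed.

Lemma bounded_measurable_dotv g : bounded_measurable (fun w => dotv g (e w)).
Proof.
apply: bounded_measurable_sum => i.
apply: bounded_measurableM; first exact: bounded_measurable_cst.
exact: bounded_measurable_coord.
Qed.

Lemma Rintegral_coord_mul i j :
  \int[P]_w (e w ord0 i * e w ord0 j) = (i == j)%:R / n%:R.
Proof.
have [<-|ij] := eqVneq i j; last by rewrite /Rintegral e_cross // mul0r.
by under eq_Rintegral do rewrite -expr2; rewrite /Rintegral e_sq mul1r.
Qed.

Lemma Rintegral_dotv_mul g h :
  \int[P]_w (dotv g (e w) * dotv h (e w)) = dotv g h / n%:R.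
Proof.
have bm_coord2 i j :
    bounded_measurable (fun w => g ord0 i * h ord0 j * (e w ord0 i * e w ord0 j)).
  by bounded_measurable_closure; exact: bounded_measurable_coord.
have -> : (fun w => dotv g (e w) * dotv h (e w)) = (fun w =>
    \sum_(i < n) \sum_(j < n) g ord0 i * h ord0 j * (e w ord0 i * e w ord0 j)).
  apply: funext => w; rewrite /dotv mulr_suml; apply: eq_bigr => i _.
  by rewrite mulr_sumr; apply: eq_bigr => j _; rewrite mulrACA.
rewrite Rintegral_sum => [|i]; last exact: bounded_measurable_sum.
rewrite /dotv mulr_suml; apply: eq_bigr => i _.
have term j : \int[P]_w (g ord0 i * h ord0 j * (e w ord0 i * e w ord0 j))
    = g ord0 i * h ord0 j * ((i == j)%:R / n%:R).
  rewrite RintegralZl ?Rintegral_coord_mul // bounded_measurable_integrable //.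
  by bounded_measurable_closure; exact: bounded_measurable_coord.
rewrite Rintegral_sum // (bigD1 i) //= big1 => [|j ji]; rewrite term.
  by rewrite eqxx addr0 mul1r.
by rewrite eq_sym (negbTE ji) mul0r mulr0.
Qed.

Lemma Rintegral_abs_dotv g :
  \int[P]_w `|dotv g (e w)| <= norm2 g / Num.sqrt n%:R.
Proof.
apply: le_trans (Rintegral_abs_le_sqrt P (bounded_measurable_dotv g)) _.
under eq_Rintegral do rewrite expr2.
by rewrite Rintegral_dotv_mul sqrtrM ?dotvv_ge0 // sqrtrV // -sqr_norm2 sqrtr_sqr.
Qed.

End RandomDirection.

Section StepSizes.
Context {R : realType} {n : nat}.
Hypothesis n_gt0 : (0 < n)%N.

Lemma alpha_gt0 k : 0 < alpha n k.+1 :> R.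
Proof. by rewrite divr_gt0 ?ltr_wpDl ?mulr_gt0 ?exprn_gt0 ?ltr0n. Qed.

Lemma AseqE m : Aseq n m
  = 1 - n%:R^-1 + (m%:R * (m%:R - 1) + 4 * n%:R * m%:R) / (4 * n%:R ^+ 2) :> R.
Proof.
have n_neq0 : n%:R != 0 :> R by rewrite pnatr_eq0 -lt0n.
elim: m => [|m IH].
  by rewrite /Aseq big_ord_recr big_ord0 /= !mul0r mulr0 !addr0 mul0r addr0 add0r.
by rewrite /Aseq big_ord_recr /= -/(Aseq n m) IH /alpha -natr1; field.
Qed.

(* [A_{k+1} - (n alpha_{k+1})^2 = k / (4 n^2)]. *)
Lemma sqr_alpha_le_Aseq k : (n%:R * alpha n k.+1) ^+ 2 <= Aseq n k.+1 :> R.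
Proof.
have n_neq0 : n%:R != 0 :> R by rewrite pnatr_eq0 -lt0n.
rewrite -subr_ge0 AseqE /alpha -natr1.
rewrite (_ : _ - _ = k%:R / (4 * n%:R ^+ 2)); last by field.
by rewrite divr_ge0 // mulr_ge0 // sqr_ge0.
Qed.

Lemma Aseq_gt0 k : 0 < Aseq n k.+1 :> R.
Proof.
apply: lt_le_trans (sqr_alpha_le_Aseq k).
by rewrite exprn_gt0 // mulr_gt0 ?ltr0n ?alpha_gt0.
Qed.

End StepSizes.

(* One step along the line [y + R e]: [p = <grad f(y), e>], [q = <u_k - u, e>], [D] is
   the derivative error and [(n a)^2 / (A L) * (p + D)] the step length from [y]. *)
Lemma mtm_gain_scalar {R : realFieldType} {L a nn A delta D : R} (p q : R) :
  0 < L -> 0 < A -> 0 <= a * nn -> (nn * a) ^+ 2 <= A -> `|D| <= delta ->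
  a * nn * (p * q) - A / L * delta * `|p| - A / L * delta ^+ 2 - a * nn * delta * `|q|
  <= A * ((nn * a) ^+ 2 / (A * L) * (p + D) * p
          - L / 2 * ((nn * a) ^+ 2 / (A * L)) ^+ 2 * (p + D) ^+ 2)
     + (a * nn * (p + D) * q - (a * nn) ^+ 2 / (2 * L) * (p + D) ^+ 2).
Proof.
move=> L_gt0 A_gt0 an_ge0 naA D_le.
set s := p + D; set kap := (nn * a) ^+ 2 / L.
have delta_ge0 : 0 <= delta := le_trans (normr_ge0 D) D_le.
have kap_ge0 : 0 <= kap by rewrite divr_ge0 ?sqr_ge0 ?ltW.
have kap_le : kap <= A / L by rewrite ler_pM2r ?invr_gt0.
have pD : kap * (p * D) <= A / L * delta * `|p|.
  apply: le_trans (ler_wpM2l kap_ge0 (ler_norm (p * D))) _.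
  rewrite normrM -mulrA (mulrC delta).
  by apply: ler_pM => //; try exact: mulr_ge0; exact: ler_wpM2l.
have DD : kap * D ^+ 2 <= A / L * delta ^+ 2.
  by apply: ler_pM => //; rewrite ?sqr_ge0 // -real_normK ?num_real // lerXn2r ?nnegrE.
have Dq : - (D * q) <= delta * `|q|.
  by rewrite (le_trans (ler_norm _)) // normrN normrM ler_wpM2r.
have ss : 0 <= kap / 2 * (1 - (nn * a) ^+ 2 / A) * s ^+ 2.
  apply: mulr_ge0; last exact: sqr_ge0.
  by apply: mulr_ge0; [exact: divr_ge0 | rewrite subr_ge0 ler_pdivrMr ?mul1r].
rewrite -subr_ge0.
rewrite (_ : _ - _ = kap / 2 * (1 - (nn * a) ^+ 2 / A) * s ^+ 2
   + (A / L * delta * `|p| - kap * (p * D)) + (A / L * delta ^+ 2 - kap * D ^+ 2)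
   + a * nn * (delta * `|q| + D * q)); last first.
  by rewrite /s /kap; field; rewrite !gt_eqF.
have Dq' : 0 <= delta * `|q| + D * q by rewrite -[X in 0 <= _ + X]opprK subr_ge0.
apply: addr_ge0; last exact: mulr_ge0.
apply: addr_ge0; last by rewrite subr_ge0.
by apply: addr_ge0; rewrite // subr_ge0.
Qed.

Section MethodStep.
Context {R : realType} {n : nat} {L : R} {gradf : 'rV[R]_n -> 'rV[R]_n}.
Context {f : 'rV[R]_n -> R^o}.
Hypothesis n_gt0 : (0 < n)%N.
Hypothesis L_gt0 : 0 < L.
Hypothesis f_diff : forall x, differentiable f x /\ forall h, 'd f x h = dotv (gradf x) h.
Hypothesis gradf_lip : forall x y, norm2 (gradf x - gradf y) <= L * norm2 (x - y).
Context {k : nat} {x u e : 'rV[R]_n} {dt : R} {x' u' : 'rV[R]_n}.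
Hypothesis step : mtm_step L gradf k x u e dt x' u'.

Lemma mtm_step_u : u' = u -
  (alpha n k.+1 * n%:R / L * (dotv (gradf (ynext k x u)) e + dt)) *: e.
Proof.
case: step => u'_min _; rewrite (prox_step_closed_form L_gt0 u'_min) /gtilde scalerA.
by congr (_ - _ *: _); ring.
Qed.

Lemma mtm_step_x : x' = ynext k x u -
  ((n%:R * alpha n k.+1) ^+ 2 / (Aseq n k.+1 * L)
   * (dotv (gradf (ynext k x u)) e + dt)) *: e.
Proof.
have A_neq0 : Aseq n k.+1 != 0 :> R by rewrite gt_eqF ?Aseq_gt0.
case: step => _ ->; rewrite mtm_step_u addrAC subrr add0r scalerN scalerA.
by congr (_ - _ *: _); field; rewrite A_neq0 gt_eqF.
Qed.

Lemma mtm_step_gain (uu : 'rV[R]_n) (delta : R) : norm2 e = 1 -> `|dt| <= delta ->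
  alpha n k.+1 * n%:R * (dotv (gradf (ynext k x u)) e * dotv (u - uu) e)
    - Aseq n k.+1 / L * delta * `|dotv (gradf (ynext k x u)) e|
    - Aseq n k.+1 / L * delta ^+ 2 - alpha n k.+1 * n%:R * delta * `|dotv (u - uu) e|
  <= Aseq n k.+1 * (f (ynext k x u) - f x') + Vdist L uu u - Vdist L uu u'.
Proof.
move=> e_unit dt_le; have ee : dotv e e = 1 by rewrite -sqr_norm2 e_unit expr1n.
set y := ynext k x u; set a := alpha n k.+1; set A := Aseq n k.+1; set nn : R := n%:R.
set p := dotv (gradf y) e; set q := dotv (u - uu) e.
set tau := (nn * a) ^+ 2 / (A * L).
have fx' : f x' <= f y - tau * (p + dt) * p + L / 2 * (tau * (p + dt)) ^+ 2.
  rewrite mtm_step_x -scaleNr.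
  apply: le_trans (smooth_upper_bound L_gt0 f_diff gradf_lip _ _) _.
  by rewrite dotvZr dotvZl dotvZr ee -/y -/p -/a -/A -/nn -/tau; lra.
have Vu' : Vdist L uu u' = Vdist L uu u - a * nn * (p + dt) * q
                           + (a * nn) ^+ 2 / (2 * L) * (p + dt) ^+ 2.
  rewrite mtm_step_u -/y -/p -/a -/nn !VdistE ?ltW //.
  rewrite (_ : uu - _ = (uu - u) + (a * nn / L * (p + dt)) *: e); last first.
    by rewrite opprB addrA addrAC.
  rewrite dotv_sqrDZ -(opprB u uu) !dotvNl -/q ee.
  by field; rewrite gt_eqF.
have A_gt0 : 0 < A := Aseq_gt0 n_gt0 k.
have an_ge0 : 0 <= a * nn by rewrite mulr_ge0 ?ler0n ?ltW ?alpha_gt0.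
apply: le_trans (mtm_gain_scalar p q L_gt0 A_gt0 an_ge0 (sqr_alpha_le_Aseq n_gt0 k) dt_le) _.
have f_gain : tau * (p + dt) * p - L / 2 * (tau * (p + dt)) ^+ 2 <= f y - f x' by lra.
have := ler_wpM2l (ltW A_gt0) f_gain; rewrite Vu' -/tau; lra.
Qed.

End MethodStep.

Section RandomStep.
Context {R : realType} {n : nat} {d : measure_display} {Omega : measurableType d}.
Context {P : probability Omega R} {L : R} {f : 'rV[R]_n -> R^o}.
Context {gradf : 'rV[R]_n -> 'rV[R]_n}.
Hypothesis n_gt0 : (0 < n)%N.
Hypothesis L_gt0 : 0 < L.
Hypothesis f_diff : forall x, differentiable f x /\ forall h, 'd f x h = dotv (gradf x) h.
Hypothesis gradf_lip : forall x y, norm2 (gradf x - gradf y) <= L * norm2 (x - y).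
Context {e : Omega -> 'rV[R]_n} {dt : Omega -> R}.
Hypothesis e_meas : forall i, measurable_fun setT (fun w => e w ord0 i).
Hypothesis e_sphere : forall w, norm2 (e w) = 1.
Hypothesis e_cross : forall i j : 'I_n, i != j ->
  (\int[P]_w (e w ord0 i * e w ord0 j)%:E = 0)%E.
Hypothesis e_sq : forall i : 'I_n, (\int[P]_w (e w ord0 i ^+ 2)%:E = (n%:R^-1)%:E)%E.
Hypothesis dt_meas : measurable_fun setT dt.
Variable delta : R.
Hypothesis dt_bound : forall w, `|dt w| <= delta.
Context {k : nat} {x u : 'rV[R]_n} {xn un : Omega -> 'rV[R]_n}.
Hypothesis step : forall w, mtm_step L gradf k x u (e w) (dt w) (xn w) (un w).
Variable uu : 'rV[R]_n.

Local Notation y := (ynext k x u).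
Local Notation a := (alpha n k.+1 : R).
Local Notation A := (Aseq n k.+1 : R).
Let p w := dotv (gradf y) (e w).
Let q w := dotv (u - uu) (e w).
Let gain w := a * n%:R * (p w * q w) - A / L * delta * `|p w|
              - A / L * delta ^+ 2 - a * n%:R * delta * `|q w|.

Let bm_e i : bounded_measurable (fun w => e w ord0 i).
Proof. exact: bounded_measurable_coord e_meas e_sphere i. Qed.

Let bm_dt : bounded_measurable dt.
Proof. by split; last exists delta. Qed.

Let bm_p : bounded_measurable p.
Proof. exact: bounded_measurable_dotv e_meas e_sphere _. Qed.

Let bm_q : bounded_measurable q.
Proof. exact: bounded_measurable_dotv e_meas e_sphere _. Qed.

Let bm_gain : bounded_measurable gain.
Proof. by rewrite /gain; bounded_measurable_closure. Qed.

Lemma bounded_measurable_Vdist_next : bounded_measurable (fun w => Vdist L uu (un w)).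
Proof.
have -> : (fun w => Vdist L uu (un w)) = fun w => L / 2 * \sum_(i < n)
      (uu ord0 i - (u ord0 i - a * n%:R / L * (p w + dt w) * e w ord0 i))
    * (uu ord0 i - (u ord0 i - a * n%:R / L * (p w + dt w) * e w ord0 i)).
  apply: funext => w; rewrite (mtm_step_u L_gt0 (step w)) VdistE ?ltW //.
  by congr (_ * _); apply: eq_bigr => i _; rewrite !mxE.
apply: bounded_measurableM; first exact: bounded_measurable_cst.
by apply: bounded_measurable_sum => i; have bm_ei := bm_e i; bounded_measurable_closure.
Qed.

Lemma expected_gain_ge :
  a * dotv (gradf y) (u - uu)
    - (A / L * delta ^+ 2 + A * delta * norm2 (gradf y) / (L * Num.sqrt n%:R)
       + a * delta * Num.sqrt n%:R / Num.sqrt L * normL L (u - uu))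
  <= \int[P]_w gain w.
Proof.
have [w0] := probability_inhabited P.
have delta_ge0 : 0 <= delta := le_trans (normr_ge0 _) (dt_bound w0).
have nn_gt0 : 0 < n%:R :> R by rewrite ltr0n.
have sqrt_nn_gt0 : 0 < Num.sqrt n%:R :> R by rewrite sqrtr_gt0.
have sqrt_L_gt0 : 0 < Num.sqrt L by rewrite sqrtr_gt0.
have coef_p : 0 <= A / L * delta.
  by apply: mulr_ge0 => //; apply: divr_ge0; [exact: ltW (Aseq_gt0 n_gt0 k) | exact: ltW].
have coef_q : 0 <= a * n%:R * delta.
  by apply: mulr_ge0 => //; apply: mulr_ge0; [exact: ltW (alpha_gt0 n_gt0 k) | exact: ltW].
have Ep : A / L * delta * \int[P]_w `|p w|
    <= A / L * delta * (norm2 (gradf y) / Num.sqrt n%:R)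
  := ler_wpM2l coef_p (Rintegral_abs_dotv e_meas e_sphere e_cross e_sq _).
have Eq : a * n%:R * delta * \int[P]_w `|q w|
    <= a * n%:R * delta * (norm2 (u - uu) / Num.sqrt n%:R)
  := ler_wpM2l coef_q (Rintegral_abs_dotv e_meas e_sphere e_cross e_sq _).
rewrite /gain !RintegralB //; try by integrable_closure.
rewrite !RintegralZl //; try by integrable_closure.
rewrite probability_Rintegral_cst (Rintegral_dotv_mul e_meas e_sphere e_cross e_sq).
rewrite (normL_norm2 _ _ (ltW L_gt0)).
have -> : a * n%:R * (dotv (gradf y) (u - uu) / n%:R) = a * dotv (gradf y) (u - uu).
  by field; rewrite gt_eqF.
have -> : A * delta * norm2 (gradf y) / (L * Num.sqrt n%:R)
    = A / L * delta * (norm2 (gradf y) / Num.sqrt n%:R).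
  by field; rewrite !gt_eqF.
have -> : a * delta * Num.sqrt n%:R / Num.sqrt L * (Num.sqrt L * norm2 (u - uu))
    = a * n%:R * delta * (norm2 (u - uu) / Num.sqrt n%:R).
  by rewrite -{2}(sqr_sqrtr (ltW nn_gt0)); field; rewrite !gt_eqF.
lra.
Qed.

Lemma expected_descent :
  ((\int[P]_w gain w + \int[P]_w Vdist L uu (un w) - Vdist L uu u)%:E
   <= A%:E * ((f y)%:E - \int[P]_w (f (xn w))%:E))%E.
Proof.
have A_gt0 : 0 < A := Aseq_gt0 n_gt0 k.
have bm_V := bounded_measurable_Vdist_next.
pose W w := f y - (gain w + Vdist L uu (un w) - Vdist L uu u) / A.
have EW : \int[P]_w W w
    = f y - (\int[P]_w gain w + \int[P]_w Vdist L uu (un w) - Vdist L uu u) / A.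
  rewrite RintegralB //; try by integrable_closure.
  rewrite RintegralZr //; try by integrable_closure.
  rewrite RintegralB //; try by integrable_closure.
  rewrite RintegralD //; try by integrable_closure.
  by rewrite !probability_Rintegral_cst.
have f_next : (\int[P]_w (f (xn w))%:E <= (\int[P]_w W w)%:E)%E.
  rewrite EFin_Rintegral; last by rewrite /W; bounded_measurable_closure.
  apply: le_integral_nonmeasurable => w; rewrite lee_fin /W lerBrDl -lerBrDr ler_pdivrMr //.
  have := mtm_step_gain n_gt0 L_gt0 f_diff gradf_lip (step w) uu delta
    (e_sphere w) (dt_bound w).
  rewrite -/(p w) -/(q w) -/(gain w) mulrC; lra.
apply: le_trans _ (lee_wpmul2l _ (leeB (lexx _) f_next)); last by rewrite lee_fin ltW.
rewrite -EFinB -EFinM lee_fin EW opprB [f y + _]addrC subrK [A * _]mulrC divfK //.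
by rewrite gt_eqF.
Qed.

End RandomStep.

Theorem corollary3
  (R : realType) (n : nat) (hn : (0 < n)%N) (L delta : R) (hL : 0 < L)
  (f : 'rV[R]_n -> R^o) (gradf : 'rV[R]_n -> 'rV[R]_n)
  (f_diff : forall x, differentiable f x /\ forall h, 'd f x h = dotv (gradf x) h)
  (f_convex : forall (x y : 'rV[R]_n) (t : R), 0 <= t <= 1 ->
      f (t *: x + (1 - t) *: y) <= t * f x + (1 - t) * f y)
  (f_lip : forall x y, norm2 (gradf x - gradf y) <= L * norm2 (x - y))
  (* history of iterations 1..k *)
  (k : nat) (eh : nat -> 'rV[R]_n) (dh : nat -> R) (x u : nat -> 'rV[R]_n)
  (hist_e : forall i, (0 < i <= k)%N -> norm2 (eh i) = 1)
  (hist_d : forall i, (0 < i <= k)%N -> `|dh i| <= delta)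
  (x0u0 : x 0%N = u 0%N)
  (hist_step : forall i, (i < k)%N ->
      mtm_step L gradf i (x i) (u i) (eh i.+1) (dh i.+1) (x i.+1) (u i.+1))
  (* randomness of iteration k+1, conditionally on iterations 1..k *)
  (d : measure_display) (Omega : measurableType d) (P : probability Omega R)
  (e : Omega -> 'rV[R]_n) (dt : Omega -> R)
  (e_meas : forall i, measurable_fun setT (fun w => e w ord0 i))
  (dt_meas : measurable_fun setT dt)
  (e_sphere : forall w, norm2 (e w) = 1)
  (dt_bound : forall w, `|dt w| <= delta)
  (e_cross : forall i j : 'I_n, i != j ->
      (\int[P]_w (e w ord0 i * e w ord0 j)%:E = 0)%E)
  (e_sq : forall i : 'I_n, (\int[P]_w (e w ord0 i ^+ 2)%:E = (n%:R^-1)%:E)%E)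
  (xn un : Omega -> 'rV[R]_n)
  (step_next : forall w,
      mtm_step L gradf k (x k) (u k) (e w) (dt w) (xn w) (un w))
  (uu : 'rV[R]_n) :
  let y := ynext k (x k) (u k) in
  let Rk := normL L (u k - uu) in
  let Mk := norm2 (gradf y) in
  ((alpha n k.+1 * dotv (gradf y) (u k - uu))%:E <=
     (Aseq n k.+1)%:E * ((f y)%:E - \int[P]_w (f (xn w))%:E)
     + (Vdist L uu (u k))%:E - \int[P]_w (Vdist L uu (un w))%:E
     + (Aseq n k.+1 / L * delta ^+ 2
        + Aseq n k.+1 * delta * Mk / (L * Num.sqrt n%:R)
        + alpha n k.+1 * delta * Num.sqrt n%:R / Num.sqrt L * Rk)%:E)%E.
Proof.
cbv zeta.
have bm_V := bounded_measurable_Vdist_next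
  hL e_meas e_sphere dt_meas delta dt_bound step_next uu.
have gain_ge := expected_gain_ge (gradf:=gradf) (k:=k) (x:=x k) (u:=u k)
  hn hL e_meas e_sphere e_cross e_sq delta dt_bound uu.
have descent := expected_descent (P:=P)
  hn hL f_diff f_lip e_meas e_sphere dt_meas delta dt_bound step_next uu.
rewrite -(EFin_Rintegral P bm_V).
apply: le_trans _ (leeD (leeB (leeD descent (lexx _)) (lexx _)) (lexx _)).
rewrite -EFinD lee_fin.
lra.
Qed.
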